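(* Let $G$ be a connected graph with minimum degree $\delta(G)\geq 3$, and let $v\in V(G)$. Suppose every vertex of $N_i(v)$ for $i=2,3,\ldots,\epsilon(v)-1$ has exactly two predecessors, each $N_i(v)$ is an independent set, and $|N_j(v)|=|N_{j-1}(v)|=|N_{j-2}(v)|=3$ for some index $3\le j\le \epsilon(v)-1$. Then $q(G)\geq 3$.
   Context: For a graph $G$ on $n$ vertices, $\mathcal{S}(G)$ is the set of real symmetric $n\times n$ matrices $A=[a_{ij}]$ with $a_{ij}\neq0$ for $i\ne j$ iff $\{i,j\}\in E(G)$ (diagonal unrestricted); $q(G)$ is the minimum number of distinct eigenvalues of a matrix in $\mathcal{S}(G)$. For $v\in V(G)$, $N_i(v)$ is the set of vertices at distance exactly $i$ from $v$, and $\epsilon(v)$ is the maximum distance from $v$ to a vertex of $G$. If $u\in N_{i-1}(v)$ and $w\in N_i(v)$ are adjacent, $u$ is a predecessor of $w$ and $w$ a successor of $u$. *)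

From mathcomp Require Import all_boot all_order all_algebra.
From mathcomp Require Import reals.
Set Implicit Arguments. Unset Strict Implicit. Unset Printing Implicit Defensive.
Import Order.TTheory GRing.Theory Num.Theory.

Section Graph.
Variable n : nat.
Variable e : rel 'I_n.

Definition simple_graph := symmetric e /\ irreflexive e.
Definition connected_graph := forall x y : 'I_n, connect e x y.
Definition min_degree_ge (k : nat) := forall x : 'I_n, k <= #|[set y | e x y]|.

Fixpoint ball (v : 'I_n) (k : nat) : {set 'I_n} :=
  match k with
  | 0 => [set v]
  | k'.+1 => ball v k' :|: [set y | [exists x in ball v k', e x y]]
  end.

(* graph distance (= n if unreachable, which cannot happen in a connected graph) *)
Definition dist (v w : 'I_n) : nat := find (fun k => w \in ball v k) (iota 0 n).

Definition Nset (v : 'I_n) (i : nat) : {set 'I_n} := [set w | dist v w == i].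

Definition ecc (v : 'I_n) : nat := \max_(w : 'I_n) dist v w.

(* predecessors of w (w is assumed in N_i(v)): adjacent vertices in N_{i-1}(v) *)
Definition preds (v : 'I_n) (i : nat) (w : 'I_n) : {set 'I_n} :=
  [set u in Nset v i.-1 | e u w].

Definition independent (S : {set 'I_n}) := forall x y, x \in S -> y \in S -> ~~ e x y.
End Graph.

Section Spectral.
Variable R : realType.
Local Open Scope ring_scope.

Definition inS (n : nat) (e : rel 'I_n) (A : 'M[R]_n) : Prop :=
  A^T = A /\ forall i j : 'I_n, i != j -> (A i j != 0) = e i j.

Definition num_distinct_eig (n : nat) (A : 'M[R]_n) (m : nat) : Prop :=
  exists s : seq R, [/\ uniq s, size s = m & forall a, eigenvalue A a <-> a \in s].

Definition q_ge (n : nat) (e : rel 'I_n) (k : nat) : Prop :=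
  forall A : 'M[R]_n, inS e A -> forall m, num_distinct_eig A m -> (k <= m)%N.
End Spectral.

From mathcomp Require Import all_boot all_order all_algebra.
From mathcomp Require Import reals complex spectral sesquilinear zify.
Import Order.TTheory GRing.Theory Num.Theory.
Set Implicit Arguments. Unset Strict Implicit. Unset Printing Implicit Defensive.

(* Let A be a matrix of S(G) with at most two distinct eigenvalues
   l1, l2.  Since A is real symmetric it is diagonalizable, so
   (A - l1 I)(A - l2 I) = 0, i.e. A^2 is a combination of A and I; hence for two
   distinct non-adjacent vertices u, w we get (A^2)_uw = sum_t A_ut A_tw = 0, so
   u and w cannot have exactly one common neighbour.
   On the graph side, independence of the distance layers N_i(v) forces every edge
   to join consecutive layers.  Write X, Y, Z for the layers N_(j-2), N_(j-1), N_j.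
   Every y in Y misses exactly one vertex of X; two predecessors of a common z in
   Z miss the same vertex (else that vertex and z have a unique common
   neighbour); since every y has a successor, every y has such a twin, and as
   |Y| = 3 all of Y misses one vertex x0 of X.  Then x0 has no successor and at
   most two predecessors, contradicting minimum degree 3.
   The file develops: counting facts on small sets, distance layers, the
   algebraic consequence of having two eigenvalues, the combinatorial argument on
   the three layers, and finally the theorem. *)

Section Counting.
Variable T : finType.

Lemma card2_mem (S : {set T}) a b t : #|S| = 2 -> a \in S -> b \in S -> a != b ->
  t \in S -> t = a \/ t = b.
Proof.
move=> cardS aS bS ab; have /subset_cardP eqS : #|[set a; b]| = #|S|.
  by rewrite cards2 ab cardS.
have /eqS <- : [set a; b] \subset S by apply/subsetP => x; rewrite !inE => /orP [] /eqP ->.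
by rewrite !inE => /orP [] /eqP; [left | right].
Qed.

Lemma card3_mem (S : {set T}) a b c t : #|S| = 3 -> a \in S -> b \in S -> c \in S ->
  a != b -> a != c -> b != c -> t \in S -> [\/ t = a, t = b | t = c].
Proof.
move=> cardS aS bS cS ab ac bc; have /subset_cardP eqS : #|[set a; b; c]| = #|S|.
  by rewrite setUC cardsU1 cards2 !inE negb_or ab eq_sym ac eq_sym bc cardS.
have /eqS <- : [set a; b; c] \subset S.
  by apply/subsetP => x; rewrite !inE => /orP [/orP [] | ] /eqP ->.
by rewrite !inE => /orP [/orP [] | ] /eqP; [constructor 1 | constructor 2 | constructor 3].
Qed.

Lemma unique_outside (X : {set T}) (P : pred T) : #|X| = 3 -> #|[set x in X | P x]| = 2 ->
  exists x0, [/\ x0 \in X, ~~ P x0 & forall x, x \in X -> ~~ P x -> x = x0].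
Proof.
move=> cardX cardP.
have : #|X :\: [set x in X | P x]| == 1.
  by rewrite cardsD (setIidPr _) ?cardX ?cardP //; apply/subsetP => x; rewrite inE => /andP [].
case/cards1P => x0 outside.
have outsideE x : (x \in X) && ~~ P x = (x == x0).
  by rewrite -in_set1 -outside !inE; case: (x \in X); case: (P x).
have /andP [x0X nPx0] : (x0 \in X) && ~~ P x0 by rewrite outsideE.
by exists x0; split => // x xX nPx; apply/eqP; rewrite -outsideE xX.
Qed.

End Counting.

Section Distance.
Variables (n : nat) (e : rel 'I_n) (v : 'I_n).

Lemma dist_le w : dist e v w <= n.
Proof. by rewrite /dist; apply: leq_trans (find_size _ _) _; rewrite size_iota. Qed.

Lemma dist_ball w : dist e v w < n -> w \in ball e v (dist e v w).
Proof.
move=> w_reached.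
have := @nth_find _ 0 (fun k => w \in ball e v k) (iota 0 n).
by rewrite has_find size_iota nth_iota // => /(_ w_reached).
Qed.

Lemma dist_min w k : k < n -> w \in ball e v k -> dist e v w <= k.
Proof.
move=> kn wk; rewrite leqNgt; apply/negP => lt_k.
have := @before_find _ 0 (fun k => w \in ball e v k) (iota 0 n) k lt_k.
by rewrite nth_iota // add0n wk.
Qed.

Lemma dist_edge x y : e x y -> dist e v y <= (dist e v x).+1.
Proof.
move=> exy; case: (ltnP (dist e v x) n) => [x_reached|]; last first.
  by move/(leq_trans (dist_le y))/leq_trans; apply.
have y_ball : y \in ball e v (dist e v x).+1.
  by rewrite /= !inE; apply/orP; right; apply/existsP; exists x; rewrite dist_ball.
case: (ltnP (dist e v x).+1 n) => [|big]; first by move/dist_min; apply.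
exact: leq_trans (dist_le y) big.
Qed.

Lemma Nset0_sub : Nset e v 0 \subset [set v].
Proof.
apply/subsetP => w; rewrite !inE => /eqP w0.
have n_gt0 : 0 < n := leq_ltn_trans (leq0n v) (ltn_ord v).
by have := dist_ball (w := w); rewrite w0 => /(_ n_gt0); rewrite inE.
Qed.

End Distance.

Section Layers.
Variables (n : nat) (e : rel 'I_n) (v : 'I_n).
Hypothesis e_sym : symmetric e.
Hypothesis layers_indep : forall i, independent e (Nset e v i).
Local Notation d := (dist e v).

Lemma edge_layers x y : e x y -> d y = (d x).+1 \/ d x = (d y).+1.
Proof.
move=> exy.
have d_ne : d x != d y.
  apply: contraTneq exy => dxy.
  by apply: (@layers_indep (d x)); rewrite inE ?dxy.
have dy_le := dist_edge v exy.
have dx_le : d x <= (d y).+1 by apply: dist_edge; rewrite e_sym.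
by move: d_ne; lia.
Qed.

Lemma has_successor x : min_degree_ge e 3 ->
  #|[set u in Nset e v (d x).-1 | e u x]| <= 2 ->
  exists2 z, d z = (d x).+1 & e x z.
Proof.
move=> deg3 few_preds.
case: (pickP (fun z => (d z == (d x).+1) && e x z)) => [z /andP [/eqP dz exz]|none].
  by exists z.
suff nbrs_preds : [set y | e x y] \subset [set u in Nset e v (d x).-1 | e u x].
  by have := leq_trans (deg3 x) (leq_trans (subset_leq_card nbrs_preds) few_preds).
apply/subsetP => y; rewrite !inE => exy.
case: (edge_layers exy) => [dy | ->]; first by have := none y; rewrite dy eqxx exy.
by rewrite eqxx e_sym.
Qed.

End Layers.

Definition unique_common_neighbour n (e : rel 'I_n) (u w c : 'I_n) :=
  forall t, e u t && e t w = (t == c).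

Section TwoEigenvalues.
Local Open Scope ring_scope.

(* A real symmetric matrix is diagonalized over the complex numbers by the
   spectral theorem for Hermitian matrices; the rows of the diagonalizing matrix
   P are eigenvectors whose eigenvalues (the diagonal d) are real eigenvalues of A. *)
Section SymmetricSpectrum.
Variables (R : realType) (n : nat) (A : 'M[R]_n).
Hypothesis A_sym : A^T = A.

Let Ac := map_mx (real_complex R) A.
Let P := spectralmx Ac.
Let d := spectral_diag Ac.

Lemma complexified_hermitian : Ac \is hermsymmx.
Proof.
apply: realsym_hermsym; last first.
  by apply/mxOverP => i j; rewrite mxE; apply/complex_realP; exists (A i j).
by rewrite qualifE expr0 scale1r map_mx_id // map_trmx A_sym.
Qed.

Lemma spectral_row_eigen i : row i P *m Ac = d 0 i *: row i P.
Proof.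
have /orthomx_spectralP Ac_eq := hermitian_normalmx complexified_hermitian.
have PAc : P *m Ac = diag_mx d *m P.
  by rewrite [in LHS]Ac_eq !mulmxA mulmxV ?spectral_unit // mul1mx.
by rewrite -row_mul PAc mul_diag_mx; apply/rowP => j; rewrite !mxE.
Qed.

Lemma spectral_row_neq0 i : row i P != 0.
Proof.
apply: contraTneq isT => Pi0.
have := congr1 (mulmx^~ (invmx P)) Pi0.
rewrite -row_mul mulmxV ?spectral_unit // mul0mx row1 => /rowP /(_ i).
by rewrite !mxE !eqxx => /eqP; rewrite oner_eq0.
Qed.

Lemma spectral_diag_eigenvalue i :
  exists2 r : R, d 0 i = real_complex R r & eigenvalue A r.
Proof.
have /complex_realP [r dr] : d 0 i \is Num.real.
  exact: mxOverP (hermitian_spectral_diag_real complexified_hermitian) 0 i.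
exists r => //; rewrite -(eigenvalue_map (real_complex R)) -/Ac.
apply/eigenvalueP; exists (row i P); last exact: spectral_row_neq0.
by rewrite spectral_row_eigen dr.
Qed.

(* A real symmetric matrix whose eigenvalues are among l1, l2 satisfies
   (A - l1 I)(A - l2 I) = 0: the product kills every row of P, and P is invertible. *)
Lemma sym_two_eigenvalues_annihilate (l1 l2 : R) :
  (forall a, eigenvalue A a -> a = l1 \/ a = l2) ->
  (A - l1%:M) *m (A - l2%:M) = 0.
Proof.
move=> eigA; apply: (@map_mx_inj _ _ (real_complex R)).
rewrite map_mxM !map_mxB !map_scalar_mx map_mx0 -/Ac.
set M := _ *m _.
have shift c i : row i P *m (Ac - c%:M) = (d 0 i - c) *: row i P.
  by rewrite mulmxBr spectral_row_eigen mul_mx_scalar scalerBl.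
have PM0 : P *m M = 0.
  apply/row_matrixP => i; rewrite row_mul row0 mulmxA shift -scalemxAl shift scalerA.
  have [r -> /eigA [] ->] := spectral_diag_eigenvalue i.
  - by rewrite subrr mul0r scale0r.
  - by rewrite subrr mulr0 scale0r.
by rewrite -[M]mul1mx -(mulVmx (spectral_unit Ac)) -mulmxA PM0 mulmx0.
Qed.

End SymmetricSpectrum.

Lemma at_most_two_values (T : eqType) (x0 : T) (s : seq T) : (size s <= 2)%N ->
  exists l1 l2, forall a, a \in s -> a = l1 \/ a = l2.
Proof.
case: s => [|a [|b [|c s]]] // _.
- by exists x0, x0.
- by exists a, a => x; rewrite inE => /eqP; left.
- by exists a, b => x; rewrite !inE => /orP [] /eqP; [left | right].
Qed.

(* If (A - l1 I)(A - l2 I) = 0 for some A in S(G), then no two distinct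
   non-adjacent vertices have exactly one common neighbour: the (u, w) entry of
   A^2 vanishes, while it reduces to the single nonzero product A_uc A_cw. *)
Lemma annihilated_no_unique_common_neighbour (R : realType) n (e : rel 'I_n)
    (A : 'M[R]_n) (l1 l2 : R) :
  irreflexive e -> inS e A -> (A - l1%:M) *m (A - l2%:M) = 0 ->
  forall u w c, u != w -> ~~ e u w -> ~ unique_common_neighbour e u w c.
Proof.
move=> e_irr [_ A_pattern] annih u w c uw nuw uniq_c.
have entry0 i j : i != j -> ~~ e i j -> A i j = 0.
  by move=> ij nij; apply/eqP/negPn; rewrite A_pattern.
have Auw := entry0 u w uw nuw.
have sq_uw : (A *m A) u w = 0.
  move: annih => /(congr1 (fun M : 'M[R]_n => M u w)).
  rewrite mulmxBl !mulmxBr !mul_mx_scalar !mul_scalar_mx !mxE Auw (negbTE uw).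
  by rewrite mulr0n !mulr0 !subr0.
have /andP [euc ecw] : e u c && e c w by rewrite uniq_c.
rewrite mxE (bigD1 c) //= big1 ?addr0 in sq_uw; last first.
  move=> t tc; case: (eqVneq t u) => [->|tu]; first by rewrite Auw mulr0.
  case: (eqVneq t w) => [->|tw]; first by rewrite Auw mul0r.
  have := uniq_c t; rewrite (negbTE tc); case eut: (e u t) => /= ntw.
  - by rewrite (entry0 t w) ?ntw ?mulr0.
  - by rewrite (entry0 u t) ?eut ?mul0r // eq_sym.
have uc : u != c by apply: contraTneq euc => ->; rewrite e_irr.
have cw : c != w by apply: contraTneq ecw => ->; rewrite e_irr.
have Auc : A u c != 0 by rewrite A_pattern.
have Acw : A c w != 0 by rewrite A_pattern.
by move/eqP: sq_uw; rewrite mulf_eq0 (negbTE Auc) (negbTE Acw).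
Qed.

End TwoEigenvalues.

Section ThreeLayers.
Variables (n : nat) (e : rel 'I_n) (v : 'I_n) (k : nat).
Hypothesis e_sym : symmetric e.
Hypothesis layers_indep : forall i, independent e (Nset e v i).
Hypothesis deg3 : min_degree_ge e 3.
Hypothesis no_unique_common : forall u w c,
  u != w -> ~~ e u w -> ~ unique_common_neighbour e u w c.
Local Notation d := (dist e v).
Local Notation "'N_ i" := (Nset e v i) (at level 8, i at level 2).

(* The layers X = N_(k+1), Y = N_(k+2), Z = N_(k+3). *)
Hypothesis preds_X : forall x, d x = k.+1 -> #|[set u in 'N_k | e u x]| <= 2.
Hypothesis preds_Y : forall y, d y = k.+2 -> #|[set x in 'N_k.+1 | e x y]| = 2.
Hypothesis preds_Z : forall z, d z = k.+3 -> #|[set y in 'N_k.+2 | e y z]| = 2.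
Hypothesis card_X : #|'N_k.+1| = 3.
Hypothesis card_Y : #|'N_k.+2| = 3.

Lemma missed_vertex y : d y = k.+2 ->
  exists x0, [/\ d x0 = k.+1, ~~ e x0 y & forall x, d x = k.+1 -> ~~ e x y -> x = x0].
Proof.
move=> dy; have [x0 [x0X nx0 x0_uniq]] := unique_outside card_X (preds_Y dy).
exists x0; split=> [|//|x dx]; first by move: x0X; rewrite inE => /eqP.
by apply: x0_uniq; rewrite inE dx.
Qed.

(* Two predecessors y1, y2 of a common z in Z have the same neighbours in X:
   otherwise the vertex of X missed by y1 only would have y2 as its unique
   common neighbour with z. *)
Lemma twins_same_preds z y1 y2 : d z = k.+3 -> d y1 = k.+2 -> d y2 = k.+2 ->
  y1 != y2 -> e y1 z -> e y2 z -> forall x, d x = k.+1 -> e x y1 = e x y2.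
Proof.
move=> dz dy1 dy2 y12 ey1z ey2z.
have [x1 [dx1 nx1 x1_uniq]] := missed_vertex dy1.
have [x2 [dx2 nx2 x2_uniq]] := missed_vertex dy2.
suff x12 : x1 = x2.
  move=> x dx; case: (eqVneq x x1) => [->|xx1]; first by rewrite (negbTE nx1) x12 (negbTE nx2).
  have ex1 : e x y1 by apply: contraNT xx1 => /(x1_uniq x dx) ->.
  have ex2 : e x y2 by apply: contraNT xx1 => /(x2_uniq x dx) ->; rewrite x12.
  by rewrite ex1 ex2.
have [//|x12] := eqVneq x1 x2; exfalso.
have ex1y2 : e x1 y2 by apply: contraNT x12 => /(x2_uniq x1 dx1) ->.
have lay := edge_layers e_sym layers_indep.
apply: (no_unique_common (u := x1) (w := z) (c := y2)).
- by apply: contra_eqN dx1 => /eqP ->; rewrite dz; lia.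
- by apply/negP => /lay; rewrite dx1 dz; lia.
- move=> t; apply/idP/eqP => [/andP [ex1t etz] | ->]; last by rewrite ex1y2 ey2z.
  have dt : d t = k.+2 by case: (lay _ _ ex1t); case: (lay _ _ etz); rewrite dx1 dz; lia.
  have mem u : d u = k.+2 -> e u z -> u \in [set y in 'N_k.+2 | e y z].
    by move=> du euz; rewrite !inE du eqxx.
  have := card2_mem (preds_Z dz) (mem _ dy1 ey1z) (mem _ dy2 ey2z) y12 (mem _ dt etz).
  by case=> // ty1; move: nx1; rewrite -ty1 ex1t.
Qed.

Lemma twin_exists y : d y = k.+2 ->
  exists y', [/\ d y' = k.+2, y' != y & forall x, d x = k.+1 -> e x y = e x y'].
Proof.
move=> dy; have [z dz eyz] : exists2 z, d z = k.+3 & e y z.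
  by rewrite -dy; apply: (has_successor e_sym layers_indep deg3); rewrite dy (preds_Y dy).
have yS : y \in [set u in 'N_k.+2 | e u z] by rewrite !inE dy eqxx.
have /card_gt0P [y' y'S] : 0 < #|[set u in 'N_k.+2 | e u z] :\ y|.
  by have := cardsD1 y [set u in 'N_k.+2 | e u z]; rewrite yS (preds_Z dz) add1n => -[<-].
move: y'S; rewrite !inE => /andP [y'y /andP [/eqP dy' ey'z]].
by exists y'; split => //; apply: (twins_same_preds dz) => //; rewrite eq_sym.
Qed.

(* Some vertex of X has no neighbour in Y: the vertex x0 missed by y1 is missed by
   the twin of y1, and a neighbour y of x0 in Y would need a third twin. *)
Lemma vertex_without_successor :
  exists x0, d x0 = k.+1 /\ forall y, d y = k.+2 -> ~~ e x0 y.
Proof.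
have [y1] : exists y1, y1 \in 'N_k.+2 by apply/card_gt0P; rewrite card_Y.
rewrite inE => /eqP dy1; have [x0 [dx0 nx0 _]] := missed_vertex dy1.
exists x0; split => // y dy; apply/negP => ex0y.
have [p1 [dp1 p1y1 same_p1]] := twin_exists dy1.
have [p [dp py same_p]] := twin_exists dy.
have y1p1 : y1 != p1 by rewrite eq_sym.
have y1y : y1 != y by apply: contraNneq nx0 => ->.
have p1y : p1 != y by apply: contraNneq nx0 => p1E; rewrite same_p1 // p1E.
have mem u : d u = k.+2 -> u \in 'N_k.+2 by move=> du; rewrite inE du.
have [py1|pp1|] := card3_mem card_Y (mem _ dy1) (mem _ dp1) (mem _ dy) y1p1 y1y p1y (mem _ dp).
- by move: nx0; rewrite -py1 -same_p // ex0y.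
- by move: nx0; rewrite (same_p1 _ dx0) -pp1 -(same_p _ dx0) ex0y.
- by move/eqP: py.
Qed.

Lemma three_layers_contradiction : False.
Proof.
have [x0 [dx0 no_succ]] := vertex_without_successor.
have [z dz ex0z] : exists2 z, d z = (d x0).+1 & e x0 z.
  by apply: (has_successor e_sym layers_indep deg3); rewrite dx0 (preds_X dx0).
by move: dz; rewrite dx0 => /no_succ; rewrite ex0z.
Qed.

End ThreeLayers.

Theorem mainTheorem6 (R : realType) (n : nat) (e : rel 'I_n) (v : 'I_n) :
  simple_graph e ->
  connected_graph e ->
  min_degree_ge e 3 ->
  (forall i, 2 <= i <= (ecc e v).-1 ->
     forall w, w \in Nset e v i -> #|preds e v i w| = 2) ->
  (forall i, independent e (Nset e v i)) ->
  (exists j, [/\ 3 <= j <= (ecc e v).-1, #|Nset e v j| = 3,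
                 #|Nset e v j.-1| = 3 & #|Nset e v j.-2| = 3]) ->
  q_ge R e 3.
Proof.
move=> [e_sym e_irr] _ deg3 preds2 indep [j [/andP [j3 j_ecc] _ card_Y card_X]].
move=> A A_S m [s [_ size_s eig_s]]; rewrite leqNgt; apply/negP => m_lt3.
have [l1 [l2 s_two]] : exists l1 l2, forall a, a \in s -> a = l1 \/ a = l2.
  by apply: at_most_two_values 0%R _ _; rewrite size_s.
have annih : ((A - l1%:M) *m (A - l2%:M) = 0)%R.
  by have [A_sym _] := A_S; apply: (sym_two_eigenvalues_annihilate A_sym) => a /eig_s /s_two.
have no_unique := annihilated_no_unique_common_neighbour e_irr A_S annih.
have [k j_eq] : exists k, j = k.+3 by exists (j - 3); lia.
subst j; apply: (three_layers_contradiction e_sym indep deg3 no_unique (k := k)) => //.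
(* Predecessor bounds on X (where X = N_1 has only v as predecessor), Y and Z. *)
- move=> x dx; case: k {j3 card_Y card_X} j_ecc dx => [|k] j_ecc dx.
    apply: leq_trans (_ : #|[set v]| <= 2); last by rewrite cards1.
    apply/subset_leq_card/(subset_trans _ (Nset0_sub e v)).
    by apply/subsetP => u; rewrite inE => /andP [].
  by apply/eq_leq/(preds2 k.+2); rewrite ?inE ?dx //=; lia.
- by move=> y dy; apply: (preds2 k.+2); rewrite ?inE ?dy //=; lia.
- by move=> z dz; apply: (preds2 k.+3); rewrite ?inE ?dz //=; lia.
Qed.
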